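(* Let $X$ be a compact metric space with metric $d$, let $L>0$, and let $f\colon X\to X$ be a continuous map with the $L$-Lipschitz shadowing property. Then $CR(f)$ is $f$-invariant and the restriction $f|_{CR(f)}\colon CR(f)\to CR(f)$ (with the restricted metric) also has the $L$-Lipschitz shadowing property.
   Context: For a continuous map $g\colon Y\to Y$ on a metric space $(Y,d)$ and $\delta>0$, a sequence $(x_i)_{i\ge0}$ in $Y$ is a $\delta$-pseudo orbit of $g$ if $d(g(x_i),x_{i+1})\le\delta$ for all $i\ge0$; it is $\epsilon$-shadowed by $y\in Y$ if $d(g^i(y),x_i)\le\epsilon$ for all $i\ge0$. $g$ has the $L$-Lipschitz shadowing property if there is $\delta_0>0$ such that for every $0<\delta\le\delta_0$, every $\delta$-pseudo orbit of $g$ is $L\delta$-shadowed by some point of $Y$. A $\delta$-chain of $f$ is a finite sequence $(x_i)_{i=0}^k$, $k\ge1$, with $d(f(x_i),x_{i+1})\le\delta$ for $0\le i\le k-1$; a $\delta$-cycle is one with $x_0=x_k$. $CR(f)$ is the set of $x\in X$ such that for every $\delta>0$ there is a $\delta$-cycle of $f$ with $x_0=x_k=x$. *)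

From Stdlib Require Import Reals.
Open Scope R_scope.

Definition is_metric {Y : Type} (d : Y -> Y -> R) : Prop :=
  (forall x y, 0 <= d x y) /\
  (forall x y, d x y = 0 <-> x = y) /\
  (forall x y, d x y = d y x) /\
  (forall x y z, d x z <= d x y + d y z).

Definition metric_open {Y : Type} (d : Y -> Y -> R) (U : Y -> Prop) : Prop :=
  forall x, U x -> exists e, 0 < e /\ forall y, d x y < e -> U y.

Definition metric_compact {Y : Type} (d : Y -> Y -> R) : Prop :=
  forall (I : Type) (U : I -> Y -> Prop),
    (forall i, metric_open d (U i)) ->
    (forall x, exists i, U i x) ->
    exists l : list I, forall x, exists i, List.In i l /\ U i x.

Definition metric_continuous {Y : Type} (d : Y -> Y -> R) (g : Y -> Y) : Prop :=
  forall x e, 0 < e -> exists r, 0 < r /\ forall y, d x y < r -> d (g x) (g y) < e.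

Definition pseudo_orbit {Y : Type} (d : Y -> Y -> R) (g : Y -> Y)
  (delta : R) (xs : nat -> Y) : Prop :=
  forall i, d (g (xs i)) (xs (S i)) <= delta.

Definition shadowed {Y : Type} (d : Y -> Y -> R) (g : Y -> Y)
  (eps : R) (xs : nat -> Y) (y : Y) : Prop :=
  forall i, d (Nat.iter i g y) (xs i) <= eps.

Definition lipschitz_shadowing {Y : Type} (d : Y -> Y -> R) (g : Y -> Y) (L : R) : Prop :=
  exists delta0, 0 < delta0 /\
    forall delta, 0 < delta -> delta <= delta0 ->
      forall xs, pseudo_orbit d g delta xs ->
        exists y, shadowed d g (L * delta) xs y.

Definition CR {X : Type} (d : X -> X -> R) (f : X -> X) (x : X) : Prop :=
  forall delta, 0 < delta ->
    exists (k : nat) (xs : nat -> X),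
      (1 <= k)%nat /\ xs 0%nat = x /\ xs k = x /\
      forall i, (i < k)%nat -> d (f (xs i)) (xs (S i)) <= delta.

Definition restrict_map {X : Type} (f : X -> X) (A : X -> Prop)
  (H : forall x, A x -> A (f x)) : {x : X | A x} -> {x : X | A x} :=
  fun y => exist A (f (proj1_sig y)) (H (proj1_sig y) (proj2_sig y)).

Definition restrict_metric {X : Type} (d : X -> X -> R) (A : X -> Prop) :
  {x : X | A x} -> {x : X | A x} -> R :=
  fun y z => d (proj1_sig y) (proj1_sig z).

From Stdlib Require Import Reals Lra Lia List ClassicalEpsilon.
Open Scope R_scope.

(* Let (x_i) be a delta-pseudo-orbit inside CR(f). Each x_(i+1) can be joined back to x_i by a
   (delta + 2 gamma)-chain: run around a gamma-cycle of x_(i+1) and leave it at its last step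
   for the successor of x_i on a gamma-cycle of x_i. Closing x_0, ..., x_(n+1) up in this way
   gives a periodic pseudo-orbit of some period p, shadowed by some y; cluster points of
   (f^(mp) y)_m are chain recurrent and shadow it as well. Since CR(f) is closed, letting n
   grow and gamma shrink gives, by compactness, a point of CR(f) shadowing the whole
   pseudo-orbit within L delta. *)

Section ChainRecurrence.

Variables (X : Type) (d : X -> X -> R) (f : X -> X).
Hypothesis d_metric : is_metric d.
Hypothesis d_compact : metric_compact d.
Hypothesis f_cont : metric_continuous d f.

Lemma dist_nonneg x y : 0 <= d x y.
Proof. exact (proj1 d_metric x y). Qed.

Lemma dist_refl x : d x x = 0.
Proof. now apply (proj1 (proj2 d_metric)). Qed.

Lemma dist_sym x y : d x y = d y x.
Proof. exact (proj1 (proj2 (proj2 d_metric)) x y). Qed.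

Lemma dist_triangle x y z : d x z <= d x y + d y z.
Proof. exact (proj2 (proj2 (proj2 d_metric)) x y z). Qed.

Lemma metric_continuous_iter i : metric_continuous d (Nat.iter i f).
Proof.
  induction i as [|i IH]; intros x e He.
  - exists e. split; [exact He|]. now intros y Hy.
  - destruct (f_cont (Nat.iter i f x) e He) as [r [Hr Hf]].
    destruct (IH x r Hr) as [s [Hs Hi]].
    exists s. split; [exact Hs|]. intros y Hy. apply Hf, Hi, Hy.
Qed.

Definition cluster_point (v : nat -> X) (z : X) : Prop :=
  forall e, 0 < e -> forall N, exists n, (N <= n)%nat /\ d (v n) z < e.

Lemma compact_cluster_point (v : nat -> X) : exists z, cluster_point v z.
Proof.
  apply NNPP. intro no_cluster.
  assert (far : forall z, exists e N, 0 < e /\ forall n, (N <= n)%nat -> e <= d (v n) z).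
  { intro z. apply NNPP. intro not_far. apply no_cluster. exists z.
    intros e He N. apply NNPP. intro never_close. apply not_far. exists e, N.
    split; [exact He|]. intros n Hn. apply Rnot_lt_le. intro Hlt.
    apply never_close. now exists n. }
  (* Balls B(z, e) that the sequence eventually stays out of cover X. *)
  destruct (d_compact (X * R * nat)%type
              (fun '(z, e, N) y => d z y < e /\ forall n, (N <= n)%nat -> e <= d (v n) z))
    as [l cover].
  - intros [[z e] N] y [Hy HN]. exists (e - d z y). split; [lra|].
    intros y' Hy'. split; [|exact HN]. pose proof (dist_triangle z y y'). lra.
  - intro y. destruct (far y) as [e [N [He HN]]]. exists (y, e, N).
    split; [rewrite dist_refl; exact He | exact HN].
  - set (M := list_max (map snd l)).
    destruct (cover (v M)) as [[[z e] N] [Hin [Hlt HN]]].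
    assert (HNM : (N <= M)%nat).
    { apply (in_map snd) in Hin.
      exact (proj1 (Forall_forall _ _) (proj1 (list_max_le _ M) (le_n M)) N Hin). }
    specialize (HN M HNM). rewrite dist_sym in HN. lra.
Qed.

Lemma cluster_point_dist_le (g : X -> X) (v : nat -> X) z w b :
  metric_continuous d g -> cluster_point v z ->
  (forall eta, 0 < eta -> exists N, forall n, (N <= n)%nat -> d (g (v n)) w <= b + eta) ->
  d (g z) w <= b.
Proof.
  intros g_cont Hz Hbound. apply Rle_plus_epsilon. intros eps Heps.
  destruct (Hbound (eps / 2)) as [N HN]; [lra|].
  destruct (g_cont z (eps / 2)) as [r [Hr Hg]]; [lra|].
  destruct (Hz r Hr N) as [n [Hn Hzn]].
  rewrite dist_sym in Hzn. specialize (Hg _ Hzn). specialize (HN n Hn).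
  pose proof (dist_triangle (g z) (g (v n)) w). lra.
Qed.

Definition path (e : R) (a b : X) : Prop :=
  exists (k : nat) (c : nat -> X), c 0%nat = a /\ c k = b /\
    forall j, (j < k)%nat -> d (f (c j)) (c (S j)) <= e.

Definition chain (e : R) (a b : X) : Prop :=
  exists (k : nat) (c : nat -> X), (1 <= k)%nat /\ c 0%nat = a /\ c k = b /\
    forall j, (j < k)%nat -> d (f (c j)) (c (S j)) <= e.

Definition glue (m : nat) (c r : nat -> X) (j : nat) : X :=
  if (j <=? m)%nat then c j else r (j - m)%nat.

Lemma glue_end m k c r : r 0%nat = c m -> glue m c r (m + k) = r k.
Proof.
  intros Hjoin. unfold glue. destruct (Nat.leb_spec (m + k) m).
  - replace k with 0%nat by lia. now rewrite Nat.add_0_r.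
  - f_equal. lia.
Qed.

Lemma glue_steps m k c r e : r 0%nat = c m ->
  (forall j, (j < m)%nat -> d (f (c j)) (c (S j)) <= e) ->
  (forall j, (j < k)%nat -> d (f (r j)) (r (S j)) <= e) ->
  forall j, (j < m + k)%nat -> d (f (glue m c r j)) (glue m c r (S j)) <= e.
Proof.
  intros Hjoin Hc Hr j Hj. unfold glue.
  destruct (Nat.leb_spec (S j) m); [|destruct (Nat.leb_spec j m)].
  - rewrite (proj2 (Nat.leb_le j m)) by lia. apply Hc. lia.
  - replace j with m by lia. replace (S m - m)%nat with 1%nat by lia.
    rewrite <- Hjoin. apply Hr. lia.
  - replace (S j - m)%nat with (S (j - m)) by lia. apply Hr. lia.
Qed.

Lemma path_refl e a : path e a a.
Proof. exists 0%nat, (fun _ => a). repeat split. intros j Hj. lia. Qed.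

Lemma path_trans e a b c : path e a b -> path e b c -> path e a c.
Proof.
  intros [m [p [Hp0 [Hpm Hp]]]] [k [r [Hr0 [Hrk Hr]]]].
  assert (Hjoin : r 0%nat = p m) by congruence.
  exists (m + k)%nat, (glue m p r). split; [|split].
  - exact Hp0.
  - now rewrite glue_end.
  - now apply glue_steps.
Qed.

Lemma path_weaken e e' a b : e <= e' -> path e a b -> path e' a b.
Proof.
  intros Hee' [k [c [Hc0 [Hck Hc]]]]. exists k, c. repeat split; auto.
  intros j Hj. specialize (Hc j Hj). lra.
Qed.

Lemma path_of_chain e a b : chain e a b -> path e a b.
Proof. intros [k [c [_ Hc]]]. now exists k, c. Qed.

Lemma path_of_steps (c : nat -> X) e i m : (i <= m)%nat ->
  (forall j, (i <= j < m)%nat -> d (f (c j)) (c (S j)) <= e) -> path e (c i) (c m).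
Proof.
  intros Him Hc. exists (m - i)%nat, (fun j => c (i + j)%nat). split; [|split].
  - now rewrite Nat.add_0_r.
  - f_equal. lia.
  - intros j Hj. replace (i + S j)%nat with (S (i + j)) by lia. apply Hc. lia.
Qed.

Lemma chain_cons e a w b : d (f a) w <= e -> path e w b -> chain e a b.
Proof.
  intros Haw [k [c [Hc0 [Hck Hc]]]].
  exists (S k), (fun j => match j with 0 => a | S j => c j end).
  split; [lia|]. split; [reflexivity|]. split; [exact Hck|].
  intros [|j] Hj; [now rewrite Hc0 | apply Hc; lia].
Qed.

Lemma chain_uncons e a b : chain e a b -> exists w, d (f a) w <= e /\ path e w b.
Proof.
  intros [k [c [Hk [Hc0 [Hck Hc]]]]]. exists (c 1%nat). split.
  - rewrite <- Hc0. apply Hc. lia.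
  - rewrite <- Hck. apply path_of_steps; [lia|]. intros j Hj. apply Hc. lia.
Qed.

Lemma chain_snoc e a u b : path e a u -> d (f u) b <= e -> chain e a b.
Proof.
  intros [m [c [Hc0 [Hcm Hc]]]] Hub.
  exists (S m), (fun j => if (j <=? m)%nat then c j else b).
  split; [lia|]. split; [exact Hc0|]. split.
  - destruct (Nat.leb_spec (S m) m); [lia | reflexivity].
  - intros j Hj. destruct (Nat.leb_spec j m); [|lia].
    destruct (Nat.leb_spec (S j) m); [apply Hc; lia|].
    replace j with m by lia. now rewrite Hcm.
Qed.

Lemma chain_unsnoc e a b : chain e a b -> exists u, path e a u /\ d (f u) b <= e.
Proof.
  intros [k [c [Hk [Hc0 [Hck Hc]]]]]. exists (c (k - 1)%nat). split.
  - rewrite <- Hc0. apply path_of_steps; [lia|]. intros j Hj. apply Hc. lia.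
  - rewrite <- Hck. replace k with (S (k - 1)) at 2 by lia. apply Hc. lia.
Qed.

Lemma chain_move_start e e' a b z : d (f z) (f a) <= e' -> chain e a b -> chain (e' + e) z b.
Proof.
  intros Hz Hab. destruct (chain_uncons _ _ _ Hab) as [w [Hw Hwb]].
  pose proof (dist_nonneg (f z) (f a)). pose proof (dist_triangle (f z) (f a) w).
  apply chain_cons with w; [lra|]. apply path_weaken with e; [lra | exact Hwb].
Qed.

Lemma chain_move_end e e' a b z : chain e a b -> d b z <= e' -> chain (e + e') a z.
Proof.
  intros Hab Hz. destruct (chain_unsnoc _ _ _ Hab) as [u [Hau Hu]].
  pose proof (dist_nonneg b z). pose proof (dist_triangle (f u) b z).
  apply chain_snoc with u; [|lra]. apply path_weaken with e; [lra | exact Hau].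
Qed.

Lemma chain_orbit e a m : 0 <= e -> (1 <= m)%nat -> chain e a (Nat.iter m f a).
Proof.
  intros He Hm. exists m, (fun j => Nat.iter j f a). repeat split; auto.
  intros j _. cbn. rewrite dist_refl. exact He.
Qed.

Lemma CR_image x : CR d f x -> CR d f (f x).
Proof.
  intros Hx e He.
  destruct (f_cont (f x) (e / 2)) as [r [Hr Hf]]; [lra|].
  assert (Hmin : 0 < Rmin (e / 2) (r / 2)) by (apply Rmin_pos; lra).
  destruct (chain_uncons _ _ _ (Hx _ Hmin)) as [w [Hw Hwx]].
  assert (Hwfx : chain (e / 2) w (f x)).
  { apply chain_snoc with x; [|rewrite dist_refl; lra].
    apply path_weaken with (Rmin (e / 2) (r / 2)); [apply Rmin_l | exact Hwx]. }
  replace e with (e / 2 + e / 2) by lra.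
  apply chain_move_start with w; [|exact Hwfx].
  left. apply Hf. pose proof (Rmin_r (e / 2) (r / 2)). lra.
Qed.

Lemma CR_of_close_chains z :
  (forall e r, 0 < e -> 0 < r -> exists a b, d z a < r /\ d b z < r /\ chain e a b) ->
  CR d f z.
Proof.
  intros Hclose e He.
  destruct (f_cont z (e / 3)) as [r [Hr Hf]]; [lra|].
  destruct (Hclose (e / 3) (Rmin r (e / 3))) as [a [b [Ha [Hb Hab]]]];
    [lra | apply Rmin_pos; lra |].
  replace e with (e / 3 + e / 3 + e / 3) by lra.
  apply chain_move_end with b; [apply chain_move_start with a; [|exact Hab]|].
  - left. apply Hf. eapply Rlt_le_trans; [exact Ha | apply Rmin_l].
  - left. eapply Rlt_le_trans; [exact Hb | apply Rmin_r].
Qed.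

Lemma CR_cluster_point v z : (forall n, CR d f (v n)) -> cluster_point v z -> CR d f z.
Proof.
  intros Hv Hz. apply CR_of_close_chains. intros e r He Hr.
  destruct (Hz r Hr 0%nat) as [n [_ Hn]].
  exists (v n), (v n). rewrite dist_sym.
  split; [exact Hn|]. split; [exact Hn | exact (Hv n e He)].
Qed.

Lemma CR_orbit_cluster_point y p z : (1 <= p)%nat ->
  cluster_point (fun m => Nat.iter (m * p) f y) z -> CR d f z.
Proof.
  intros Hp Hz. apply CR_of_close_chains. intros e r He Hr.
  destruct (Hz r Hr 0%nat) as [m [_ Hm]].
  destruct (Hz r Hr (S m)) as [n [Hmn Hn]].
  exists (Nat.iter (m * p) f y), (Nat.iter (n * p) f y).
  split; [rewrite dist_sym; exact Hm|]. split; [exact Hn|].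
  replace (n * p)%nat with ((n - m) * p + m * p)%nat by nia.
  rewrite Nat.iter_add. apply chain_orbit; [lra | nia].
Qed.

Lemma pseudo_orbit_periodic (c : nat -> X) p e : (1 <= p)%nat -> c p = c 0%nat ->
  (forall j, (j < p)%nat -> d (f (c j)) (c (S j)) <= e) ->
  pseudo_orbit d f e (fun j => c (j mod p)).
Proof.
  intros Hp Hcp Hc j. cbv beta.
  assert (Hlt : (j mod p < p)%nat) by (apply Nat.mod_upper_bound; lia).
  replace (c (S j mod p)) with (c (S (j mod p))); [apply Hc; exact Hlt|].
  change (S j) with (1 + j)%nat. rewrite <- Nat.Div0.add_mod_idemp_r.
  change (1 + j mod p)%nat with (S (j mod p)).
  destruct (Nat.eq_dec (S (j mod p)) p) as [E | E].
  - now rewrite E, Nat.Div0.mod_same.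
  - rewrite (Nat.mod_small (S (j mod p))); [reflexivity | lia].
Qed.

Lemma periodic_shadowed_by_CR (P : nat -> X) p eps y : (1 <= p)%nat ->
  (forall j, P (j + p)%nat = P j) -> shadowed d f eps P y ->
  exists z, CR d f z /\ shadowed d f eps P z.
Proof.
  intros Hp HP Hy.
  assert (HPm : forall i m, P (i + m * p)%nat = P i).
  { intros i m. induction m as [|m IH]; [now rewrite Nat.add_0_r|].
    rewrite <- IH, <- (HP (i + m * p)%nat). f_equal. nia. }
  destruct (compact_cluster_point (fun m => Nat.iter (m * p) f y)) as [z Hz].
  exists z. split; [exact (CR_orbit_cluster_point y p z Hp Hz)|].
  intro i. apply (cluster_point_dist_le _ _ _ _ _ (metric_continuous_iter i) Hz).
  intros eta Heta. exists 0%nat. intros m _.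
  rewrite <- Nat.iter_add, <- (HPm i m). pose proof (Hy (i + m * p)%nat). lra.
Qed.

Lemma CR_shadowed_of_segments (x : nat -> X) eps :
  (forall eta n, 0 < eta -> exists z, CR d f z /\
     forall i, (i <= n)%nat -> d (Nat.iter i f z) (x i) <= eps + eta) ->
  exists z, CR d f z /\ shadowed d f eps x z.
Proof.
  intros Hseg.
  destruct (choice (fun n z => CR d f z /\
     forall i, (i <= n)%nat -> d (Nat.iter i f z) (x i) <= eps + / INR (S n))) as [v Hv].
  { intro n. apply Hseg. apply Rinv_0_lt_compat, lt_0_INR. lia. }
  destruct (compact_cluster_point v) as [z Hz].
  exists z. split; [apply (CR_cluster_point v z); [intro n; apply Hv | exact Hz]|].
  intro i. apply (cluster_point_dist_le _ _ _ _ _ (metric_continuous_iter i) Hz).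
  intros eta Heta. destruct (archimed_cor1 eta Heta) as [N [HN HN0]].
  exists (max i N). intros n Hn.
  pose proof (proj2 (Hv n) i ltac:(lia)).
  assert (/ INR (S n) <= / INR N).
  { apply Rinv_le_contravar; [apply lt_0_INR; lia | apply le_INR; lia]. }
  lra.
Qed.

Lemma path_back_step a b delta gamma : 0 < gamma -> CR d f a -> CR d f b ->
  d (f b) a <= delta -> path (delta + 2 * gamma) a b.
Proof.
  intros Hg Ha Hb Hba.
  destruct (chain_uncons _ _ _ (Hb gamma Hg)) as [w [Hw Hwb]].
  assert (Haw : d a w <= delta + gamma).
  { pose proof (dist_triangle a (f b) w). rewrite (dist_sym a (f b)) in *. lra. }
  pose proof (dist_nonneg (f b) a).
  apply path_trans with w.
  - replace (delta + 2 * gamma) with (gamma + (delta + gamma)) by ring.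
    exact (path_of_chain _ _ _ (chain_move_end _ _ _ _ _ (Ha gamma Hg) Haw)).
  - apply path_weaken with gamma; [lra | exact Hwb].
Qed.

Lemma path_back_along_pseudo_orbit (x : nat -> X) delta gamma : 0 < gamma ->
  (forall i, CR d f (x i)) -> pseudo_orbit d f delta x ->
  forall n, path (delta + 2 * gamma) (x n) (x 0%nat).
Proof.
  intros Hg Hx Hpo n. induction n as [|n IH]; [apply path_refl|].
  apply path_trans with (x n); [apply path_back_step; auto | exact IH].
Qed.

Lemma cycle_through_segment (x : nat -> X) e n :
  (forall i, (i <= n)%nat -> d (f (x i)) (x (S i)) <= e) -> path e (x (S n)) (x 0%nat) ->
  exists p c, (n < p)%nat /\ c p = c 0%nat /\ (forall i, (i <= n)%nat -> c i = x i) /\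
    forall j, (j < p)%nat -> d (f (c j)) (c (S j)) <= e.
Proof.
  intros Hx [k [r [Hr0 [Hrk Hr]]]].
  exists (S n + k)%nat, (glue (S n) x r). split; [lia|]. split; [|split].
  - now rewrite glue_end, Hrk.
  - intros i Hi. unfold glue. now destruct (Nat.leb_spec i (S n)); [|lia].
  - apply glue_steps; [exact Hr0 | intros j Hj; apply Hx; lia | exact Hr].
Qed.

Section Shadowing.

Variables (L delta0 : R).
Hypothesis L_pos : 0 < L.
Hypothesis f_shadowing : forall delta, 0 < delta -> delta <= delta0 ->
  forall xs, pseudo_orbit d f delta xs -> exists y, shadowed d f (L * delta) xs y.

Lemma CR_pseudo_orbit_segment_shadowed (x : nat -> X) delta delta' n :
  0 < delta -> delta < delta' -> delta' <= delta0 ->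
  (forall i, CR d f (x i)) -> pseudo_orbit d f delta x ->
  exists z, CR d f z /\ forall i, (i <= n)%nat -> d (Nat.iter i f z) (x i) <= L * delta'.
Proof.
  intros Hd Hdd' Hd'0 Hx Hpo.
  assert (Hback : path delta' (x (S n)) (x 0%nat)).
  { replace delta' with (delta + 2 * ((delta' - delta) / 2)) by field.
    apply path_back_along_pseudo_orbit; auto. lra. }
  destruct (cycle_through_segment x delta' n) as [p [c [Hnp [Hcp [Hcx Hc]]]]];
    [intros i _; pose proof (Hpo i); lra | exact Hback |].
  destruct (f_shadowing delta' ltac:(lra) Hd'0 _
              (pseudo_orbit_periodic c p delta' ltac:(lia) Hcp Hc)) as [y Hy].
  assert (Hperiodic : forall j, c ((j + p) mod p) = c (j mod p)).
  { intro j. now rewrite <- (Nat.Div0.mod_add j 1 p), Nat.mul_1_l. }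
  destruct (periodic_shadowed_by_CR _ p _ y ltac:(lia) Hperiodic Hy) as [z [Hz Hzc]].
  exists z. split; [exact Hz|]. intros i Hi.
  specialize (Hzc i). cbv beta in Hzc. now rewrite Nat.mod_small, Hcx in Hzc by lia.
Qed.

Lemma CR_pseudo_orbit_shadowed (x : nat -> X) delta :
  0 < delta -> 2 * delta <= delta0 -> (forall i, CR d f (x i)) -> pseudo_orbit d f delta x ->
  exists z, CR d f z /\ shadowed d f (L * delta) x z.
Proof.
  intros Hd Hd0 Hx Hpo. apply CR_shadowed_of_segments. intros eta n Heta.
  pose proof (Rmin_l delta (eta / L)). pose proof (Rmin_r delta (eta / L)).
  assert (Hmin : 0 < Rmin delta (eta / L)) by (apply Rmin_pos; [|apply Rdiv_lt_0_compat]; lra).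
  destruct (CR_pseudo_orbit_segment_shadowed x delta (delta + Rmin delta (eta / L)) n)
    as [z [Hz Hzx]]; [lra | lra | lra | exact Hx | exact Hpo |].
  exists z. split; [exact Hz|]. intros i Hi. specialize (Hzx i Hi).
  assert (L * Rmin delta (eta / L) <= eta).
  { replace eta with (L * (eta / L)) at 2 by (field; lra).
    apply Rmult_le_compat_l; lra. }
  nra.
Qed.

End Shadowing.

End ChainRecurrence.

Lemma iter_restrict_map {X} (f : X -> X) (A : X -> Prop) H (y : {x : X | A x}) i :
  proj1_sig (Nat.iter i (restrict_map f A H) y) = Nat.iter i f (proj1_sig y).
Proof. induction i as [|i IH]; [reflexivity|]. simpl. now rewrite <- IH. Qed.

Theorem theorem1p7 (X : Type) (d : X -> X -> R) (f : X -> X) (L : R) :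
  is_metric d -> metric_compact d -> 0 < L -> metric_continuous d f ->
  lipschitz_shadowing d f L ->
  exists H : (forall x, CR d f x -> CR d f (f x)),
    lipschitz_shadowing (restrict_metric d (CR d f)) (restrict_map f (CR d f) H) L.
Proof.
  intros d_metric d_compact L_pos f_cont [delta0 [Hdelta0 f_shadowing]].
  exists (CR_image X d f d_metric f_cont).
  exists (delta0 / 2). split; [lra|].
  intros delta Hdelta Hdelta_le xs Hxs.
  destruct (CR_pseudo_orbit_shadowed X d f d_metric d_compact f_cont L delta0 L_pos
              f_shadowing (fun i => proj1_sig (xs i)) delta Hdelta ltac:(lra)
              (fun i => proj2_sig (xs i)) Hxs) as [z [Hz Hzx]].
  exists (exist _ z Hz). intro i.
  unfold restrict_metric. rewrite iter_restrict_map. exact (Hzx i).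
Qed.
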